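(* Let $m,n>0$, let $f$ and $g$ be concave positive real functions on $[0,m]$ and $[0,n]$ respectively, and let $A=\{(x,y): 0\le x\le m,\ 0\le y\le f(x)\}$ and $B=\{(x,y): 0\le x\le n,\ 0\le y\le g(x)\}$. Let $k\ge1$, let $0=x_0<x_1<\cdots<x_k=m$ and $0=x'_0<x'_1<\cdots<x'_k=n$ be the partitions of $[0,m]$ and $[0,n]$ into $k$ equal parts, and for $i=1,\dots,k$ let $$A_i=\{(x,y): x_{i-1}\le x\le x_i,\ 0\le y\le f(x)\},\qquad B_i=\{(x,y): x'_{i-1}\le x\le x'_i,\ 0\le y\le g(x)\}.$$ If $|A+B|=\left(\frac{|A|}{m}+\frac{|B|}{n}\right)(m+n)$, then for every $i=1,\dots,k$, $$|A_i+B_i|=\left(\frac{|A_i|}{m/k}+\frac{|B_i|}{n/k}\right)\left(\frac{m}{k}+\frac{n}{k}\right).$$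
   Context: $|X|$ denotes area; $A+B$ is the Minkowski sum. *)

From HB Require Import structures.
From mathcomp Require Import all_boot all_order all_algebra.
From mathcomp Require Import all_classical all_reals all_analysis.
Set Implicit Arguments. Unset Strict Implicit. Unset Printing Implicit Defensive.
Import Order.TTheory GRing.Theory Num.Theory.
Local Open Scope classical_set_scope.
Local Open Scope ring_scope.

(* On (Lebesgue)
   measurable sets, in particular on convex sets, this is the usual area. *)
Definition area (R : realType) (X : set (R * R)) : \bar R :=
  mu_ext (lebesgue_measure \x lebesgue_measure)%E X.

Definition minkowski_sum (R : realType) (A B : set (R * R)) : set (R * R) :=
  [set z | exists a, exists b, A a /\ B b /\ z = (a.1 + b.1, a.2 + b.2)].

Definition concave_on (R : realType) (a b : R) (f : R -> R) : Prop :=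
  forall x y t : R, a <= x <= b -> a <= y <= b -> 0 <= t <= 1 ->
    t * f x + (1 - t) * f y <= f (t * x + (1 - t) * y).

Definition positive_on (R : realType) (a b : R) (f : R -> R) : Prop :=
  forall x : R, a <= x <= b -> 0 < f x.

Definition region_under (R : realType) (a b : R) (f : R -> R) : set (R * R) :=
  [set p | a <= p.1 <= b /\ 0 <= p.2 <= f p.1].

(* With s = m + n, the region C under z |-> f (m z / s) + g (n z / s), 0 ≤ z ≤ s,
   lies in A + B (cut the ordinate at f (m z / s)), and the substitutions
   x = m z / s, x' = n z / s give |C| = (|A|/m + |B|/n)(m + n); so the hypothesis
   says |C| = |A + B| < +oo.  The vertical strip S over
   [x_(i-1) + x'_(i-1), x_i + x'_i] is measurable, so |C| = |A + B| and C ⊆ A + B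
   force |C ∩ S| = |(A + B) ∩ S|.  Now C ∩ S is the region under the same
   function over the strip, it lies in A_i + B_i and its area is the right-hand
   side, while A_i + B_i ⊆ (A + B) ∩ S.  Concavity only serves to make f and g
   measurable and bounded. *)

From HB Require Import structures.
From mathcomp Require Import all_boot all_order all_algebra.
From mathcomp Require Import all_classical all_reals all_analysis.
From mathcomp Require Import measurable_realfun ring lra.
Import Order.TTheory GRing.Theory Num.Theory.
Local Open Scope classical_set_scope.
Local Open Scope ring_scope.
Set Implicit Arguments.
Unset Strict Implicit.
Unset Printing Implicit Defensive.

Section concave_on.
Variable R : realType.
Implicit Types (a b : R) (f : R -> R).

Lemma concave_on_ge_min a b f y1 y2 z : concave_on a b f ->
  a <= y1 -> y1 <= z -> z <= y2 -> y2 <= b -> Num.min (f y1) (f y2) <= f z.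
Proof.
move=> cf ay1 y1z zy2 y2b.
have [y12|y12] := eqVneq y1 y2.
  have -> : z = y1 by lra.
  by rewrite -y12 minxx.
pose t := (y2 - z) / (y2 - y1).
have y21 : y2 - y1 != 0 by rewrite subr_eq0 eq_sym.
have zE : z = t * y1 + (1 - t) * y2 by rewrite /t; field.
have t01 : 0 <= t <= 1.
  by rewrite divr_ge0 ?ler_pdivrMr /=; lra.
have conc : t * f y1 + (1 - t) * f y2 <= f z.
  by rewrite zE; apply: cf => //; apply/andP; split; lra.
apply: le_trans conc.
have m1 : Num.min (f y1) (f y2) <= f y1 by rewrite ge_min lexx.
have m2 : Num.min (f y1) (f y2) <= f y2 by rewrite ge_min lexx orbT.
nra.
Qed.

Lemma concave_on_measurable a b f : concave_on a b f -> measurable_fun `[a, b] f.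
Proof.
move=> cf; apply: measurability; first exact: RGenCInfty.measurableE.
move=> _ [_ [c ->] <-]; apply: is_interval_measurable.
move=> y1 y2 [/= Hy1 fy1] [/= Hy2 fy2] z /andP[y1z zy2].
move: Hy1 Hy2 fy1 fy2; rewrite !in_itv /= !andbT.
move=> /andP[ay1 _] /andP[_ y2b] fy1 fy2.
split; first by apply/andP; split; lra.
apply: le_trans _ (concave_on_ge_min cf ay1 y1z zy2 y2b).
by rewrite le_min fy1 fy2.
Qed.

Lemma concave_on_le_twice_mid a b f : concave_on a b f ->
  (forall x, a <= x <= b -> 0 <= f x) ->
  forall x, a <= x <= b -> f x <= 2 * f ((a + b) / 2).
Proof.
move=> cf f0 x xab.
have xab' : a <= a + b - x <= b by move: xab => /andP[? ?]; apply/andP; split; lra.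
have half01 : 0 <= (1 / 2 : R) <= 1 by apply/andP; split; lra.
have := cf _ _ _ xab xab' half01.
have -> : 1 / 2 * x + (1 - 1 / 2) * (a + b - x) = (a + b) / 2 by field.
have := f0 _ xab'; lra.
Qed.

End concave_on.

Section area.
Variable R : realType.
Implicit Types (a b : R) (h : R -> R) (X Y : set (R * R)).

Lemma area_ge0 X : (0 <= area X)%E.
Proof. exact: mu_ext_ge0. Qed.

Lemma le_area X Y : X `<=` Y -> (area X <= area Y)%E.
Proof. exact: le_mu_ext. Qed.

Lemma measurable_region_under a b h :
  measurable_fun `[a, b] h -> measurable (region_under a b h).
Proof.
move=> mh.
have -> : region_under a b h =
    (`[a, b] `*` [set: R] `&` (fun p => h p.1 - p.2) @^-1` `[0, +oo[)
    `&` ([set: R] `*` `[0, +oo[).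
  apply/seteqP; split => [[u v] /= [Hu Hv]|[u v] /= [[[Hu _]]]].
    move: Hu Hv; rewrite !in_itv /= !andbT => Hu /andP[v0 vh].
    by split; [split; [|rewrite subr_ge0]|].
  by rewrite !in_itv /= !andbT subr_ge0 => hv [_ v0]; split => //; apply/andP.
apply: measurableI; last exact: measurableX.
have mD : measurable (`[a, b] `*` [set: R]) by apply: measurableX.
apply: (measurable_funB _ _ mD) => //.
  apply: (measurable_comp (F := `[a, b])) => //; first by move=> _ [[u v] [/= Hu _] <-].
  exact: measurable_funTS measurable_fst.
exact: measurable_funTS measurable_snd.
Qed.

Lemma region_under_setI_strip a b p q h : a <= p -> q <= b ->
  region_under a b h `&` (`[p, q] `*` [set: R]) = region_under p q h.
Proof.
move=> ap qb; apply/seteqP; split => -[z w] /=.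
  by move=> [[_ Hw] [Hz _]]; split => //; move: Hz; rewrite in_itv.
move=> [/andP[pz zq] Hw]; split; split => //; last by rewrite in_itv /= pz zq.
by apply/andP; split; lra.
Qed.

Lemma area_region_under a b h :
  measurable_fun `[a, b] h -> (forall x, a <= x <= b -> 0 <= h x) ->
  area (region_under a b h) = (\int[lebesgue_measure]_(x in `[a, b]) (h x)%:E)%E.
Proof.
move=> mh h0.
rewrite /area measurable_mu_extE; last exact: measurable_region_under.
rewrite /product_measure1 /= integral_mkcond.
apply: eq_integral => x _; rewrite patchE /=; case: ifPn => [|/negP] xab.
  have -> : xsection (region_under a b h) x = `[0, h x]%classic.
    apply/seteqP; split => y; rewrite /xsection /region_under /= inE /=.
      by move=> [_ Hy]; rewrite in_itv.
    by rewrite in_itv /= => Hy; split => //; move: xab; rewrite inE /= in_itv.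
  move: xab; rewrite inE /= in_itv /= => /h0 hx0.
  by rewrite lebesgue_measure_itv /= lte_fin lt_neqAle hx0 andbT; case: eqP => [<-|];
    rewrite ?oppr0 ?adde0.
have -> : xsection (region_under a b h) x = set0.
  apply/seteqP; split => y; rewrite /xsection /region_under /= inE //=.
  by move=> [Hx _]; apply: xab; rewrite inE /= in_itv.
by rewrite measure0.
Qed.

Lemma area_region_under_fin_num a b h M :
  (forall x, a <= x <= b -> h x <= M) -> area (region_under a b h) \is a fin_num.
Proof.
move=> hM.
have sub : region_under a b h `<=` `[a, b] `*` `[0, M].
  move=> [x y] /= [xab /andP[y0 yh]]; rewrite !in_itv /= xab y0.
  by split => //; apply: le_trans yh (hM _ xab).
rewrite ge0_fin_numE ?area_ge0 //; apply: le_lt_trans (le_area sub) _.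
rewrite /area measurable_mu_extE; last exact: measurableX.
rewrite /= product_measure1E //.
change (lebesgue_measure (`[a, b] : set R) * lebesgue_measure (`[0%R, M] : set R)
  < +oo)%E.
by rewrite !lebesgue_measure_itv /=; case: ifP; case: ifP; rewrite ?mule0 ?mul0e // -EFinM ltry.
Qed.

Lemma area_squeeze (C D X S : set (R * R)) : measurable S ->
  C `<=` D -> area D = area C -> area C \is a fin_num ->
  C `&` S `<=` X -> X `<=` D `&` S -> area X = area (C `&` S).
Proof.
move=> mS CD DC Cfin CSX XDS.
have areaIC Y : area Y = (area (Y `&` S) + area (Y `&` ~` S))%E.
  exact: caratheodory_measurable_mu_ext.
have fin_sub Y : (area Y <= area C)%E -> area Y \is a fin_num.
  move=> YC; rewrite ge0_fin_numE ?area_ge0 //.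
  by apply: le_lt_trans YC _; rewrite -ge0_fin_numE ?area_ge0.
have finDS : area (D `&` S) \is a fin_num.
  by apply: fin_sub; rewrite -DC le_area.
have finDC : area (D `&` ~` S) \is a fin_num.
  by apply: fin_sub; rewrite -DC le_area.
have finCS : area (C `&` S) \is a fin_num by apply: fin_sub; rewrite le_area.
have finCC : area (C `&` ~` S) \is a fin_num by apply: fin_sub; rewrite le_area.
have finX : area X \is a fin_num by apply: fin_sub; rewrite -DC le_area // => z /XDS [].
have CSX' := le_area CSX; have XDS' := le_area XDS.
have CDC : (area (C `&` ~` S) <= area (D `&` ~` S))%E.
  by apply: le_area => z [/CD Dz nSz].
move: DC CSX' XDS' CDC; rewrite (areaIC D) (areaIC C).
rewrite -(fineK finX) -(fineK finDS) -(fineK finDC) -(fineK finCS) -(fineK finCC).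
rewrite -!EFinD !lee_fin => eqDC le1 le2 le3.
have {}eqDC := EFin_inj eqDC.
by congr (_%:E); lra.
Qed.

End area.

Section dilation.
Variable R : realType.
Variable c : R.
Hypothesis c_gt0 : 0 < c.

Let mulc_measurable :
  @measurable_fun _ _ (measurableTypeR R) (measurableTypeR R) [set: R] ( *%R c) :=
  mulrl_measurable c.

Let lebesgue_dilated := measure_function_pushforward__canonical__measure_function_Measure
  (@lebesgue_measure R) mulc_measurable.

(* Both sides are measures agreeing on the intervals ]u, v], hence everywhere. *)
Lemma lebesgue_measure_dilate (A : set R) : measurable A ->
  lebesgue_measure A = (c%:E * lebesgue_measure (( *%R c) @^-1` A))%E.
Proof.
move=> mA.
have := @lebesgue_measure_unique R (mscale (NngNum (ltW c_gt0)) lebesgue_dilated) _ A mA.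
apply => _ [[u v] _ <-].
transitivity (c%:E * lebesgue_measure (( *%R c) @^-1` `]u, v]%classic))%E; last by [].
have -> : ( *%R c) @^-1` `]u, v]%classic = `]u / c, v / c]%classic.
  by apply/seteqP; split => x; rewrite /= !in_itv /= ltr_pdivrMr // ler_pdivlMr //
    ![x * c]mulrC.
rewrite !lebesgue_measure_itv /= !lte_fin ltr_pM2r ?invr_gt0 //.
case: ltP => _; last by rewrite mule0.
by rewrite -!EFinD -EFinM; congr (_%:E); field; rewrite gt_eqF.
Qed.

Lemma integral_dilate (a b : R) (F : R -> R) :
  measurable_fun `[c * a, c * b] F -> (forall x, c * a <= x <= c * b -> 0 <= F x) ->
  (\int[lebesgue_measure]_(x in `[a, b]) (F (c * x))%:E =
   (c^-1)%:E * \int[lebesgue_measure]_(x in `[(c * a)%R, (c * b)%R]) (F x)%:E)%E.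
Proof.
move=> mF F0.
have F0' x : `[c * a, c * b]%classic x -> (0 <= (F x)%:E)%E.
  by rewrite /= in_itv /= lee_fin => /F0.
have -> : (\int[lebesgue_measure]_(x in `[(c * a)%R, (c * b)%R]) (F x)%:E =
    \int[mscale (NngNum (ltW c_gt0)) lebesgue_dilated]_(x in `[(c * a)%R, (c * b)%R])
      (F x)%:E)%E.
  by apply: eq_measure_integral => A mA _; exact: lebesgue_measure_dilate.
rewrite ge0_integral_mscale //=; last exact/measurable_EFinP.
rewrite ge0_integral_pushforward //; last 2 first.
- exact/measurable_EFinP.
- by move=> x /set_mem /F0'.
have -> : ( *%R c) @^-1` `[c * a, c * b]%classic = `[a, b]%classic.
  by apply/seteqP; split => x; rewrite /= !in_itv /= !ler_pM2l.
by rewrite muleA -EFinM mulVf ?gt_eqF // mul1e.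
Qed.

End dilation.

Section dilated_sum.
Variable R : realType.
Implicit Types (u v al be : R) (f g : R -> R).

Definition dilated_sum al be f g (z : R) : R := f (al * z) + g (be * z).

Lemma region_under_dilated_sum_sub u v al be f g :
  0 <= al -> 0 <= be -> al + be = 1 ->
  (forall x, al * u <= x <= al * v -> 0 <= f x) ->
  (forall x, be * u <= x <= be * v -> 0 <= g x) ->
  region_under u v (dilated_sum al be f g) `<=`
  minkowski_sum (region_under (al * u) (al * v) f) (region_under (be * u) (be * v) g).
Proof.
move=> al0 be0 albe f0 g0 [z w] /= [/andP[uz zv] /andP[w0 wH]].
have zal : al * u <= al * z <= al * v by rewrite !ler_wpM2l.
have zbe : be * u <= be * z <= be * v by rewrite !ler_wpM2l.
have zE : z = al * z + be * z by rewrite -mulrDl albe mul1r.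
have [wf|fw] := leP w (f (al * z)).
  exists (al * z, w), (be * z, 0); split; [|split].
  - by split => //=; apply/andP.
  - by split => //=; rewrite lexx g0.
  - by rewrite /= addr0 -zE.
exists (al * z, f (al * z)), (be * z, w - f (al * z)); split; [|split].
- by split => //=; rewrite f0 ?lexx.
- by split => //=; rewrite subr_ge0 ltW //= lerBlDl.
- by rewrite /= -zE subrKC.
Qed.

Lemma area_region_under_dilated_sum u v al be f g : 0 < al -> 0 < be ->
  measurable_fun `[al * u, al * v] f -> measurable_fun `[be * u, be * v] g ->
  (forall x, al * u <= x <= al * v -> 0 <= f x) ->
  (forall x, be * u <= x <= be * v -> 0 <= g x) ->
  area (region_under u v (dilated_sum al be f g)) =
  ((al^-1)%:E * area (region_under (al * u) (al * v) f) +
   (be^-1)%:E * area (region_under (be * u) (be * v) g))%E.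
Proof.
move=> al0 be0 mf mg f0 g0.
have mfal : measurable_fun `[u, v] (fun z => f (al * z)).
  apply: (measurable_comp (F := `[al * u, al * v]%classic)) => //.
  by move=> _ [z /= + <-]; rewrite !in_itv /= => /andP[uz zv]; rewrite !ler_pM2l // uz zv.
have mgbe : measurable_fun `[u, v] (fun z => g (be * z)).
  apply: (measurable_comp (F := `[be * u, be * v]%classic)) => //.
  by move=> _ [z /= + <-]; rewrite !in_itv /= => /andP[uz zv]; rewrite !ler_pM2l // uz zv.
have f0al z : u <= z <= v -> 0 <= f (al * z).
  by move=> /andP[uz zv]; apply: f0; rewrite !ler_pM2l // uz zv.
have g0be z : u <= z <= v -> 0 <= g (be * z).
  by move=> /andP[uz zv]; apply: g0; rewrite !ler_pM2l // uz zv.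
rewrite !area_region_under //; last first.
- by move=> z zuv; rewrite addr_ge0 ?f0al ?g0be.
- exact: measurable_funD.
under eq_integral do rewrite EFinD.
rewrite ge0_integralD //; [|exact/measurable_EFinP..].
by rewrite (integral_dilate al0) // (integral_dilate be0).
Qed.

End dilated_sum.

Section strip.
Variables (R : realType) (m n : R) (f g : R -> R).
Hypotheses (m_gt0 : 0 < m) (n_gt0 : 0 < n).
Hypotheses (mf : measurable_fun `[0, m] f) (mg : measurable_fun `[0, n] g).
Hypothesis f_ge0 : forall x, 0 <= x <= m -> 0 <= f x.
Hypothesis g_ge0 : forall x, 0 <= x <= n -> 0 <= g x.

Let s := m + n.
Let F := dilated_sum (m / s) (n / s) f g.

Let s_gt0 : 0 < s. Proof. exact: addr_gt0. Qed.

Let dilate_mE t : m / s * (t * s) = t * m.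
Proof. by rewrite mulrCA divfK ?gt_eqF. Qed.

Let dilate_nE t : n / s * (t * s) = t * n.
Proof. by rewrite mulrCA divfK ?gt_eqF. Qed.

Let scaled_itv_sub (c t t' x : R) : 0 < c -> 0 <= t -> t' <= 1 ->
  t * c <= x <= t' * c -> 0 <= x <= c.
Proof. by move=> c0 t0 t'1 /andP[? ?]; apply/andP; split; nra. Qed.

Lemma region_under_strip_sub (t t' : R) : 0 <= t -> t' <= 1 ->
  region_under (t * s) (t' * s) F `<=`
  minkowski_sum (region_under (t * m) (t' * m) f) (region_under (t * n) (t' * n) g).
Proof.
move=> t0 t'1; rewrite -!dilate_mE -!dilate_nE.
apply: region_under_dilated_sum_sub; rewrite ?divr_ge0 ?ltW //.
- by rewrite -mulrDl divff ?gt_eqF.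
- by move=> x; rewrite !dilate_mE => /(scaled_itv_sub m_gt0 t0 t'1) /f_ge0.
- by move=> x; rewrite !dilate_nE => /(scaled_itv_sub n_gt0 t0 t'1) /g_ge0.
Qed.

Lemma area_region_under_strip (t t' : R) : 0 <= t -> t' <= 1 ->
  area (region_under (t * s) (t' * s) F) =
  (area (region_under (t * m) (t' * m) f) * (s / m)%:E
   + area (region_under (t * n) (t' * n) g) * (s / n)%:E)%E.
Proof.
move=> t0 t'1; rewrite area_region_under_dilated_sum ?divr_gt0 //;
  rewrite ?dilate_mE ?dilate_nE ?invf_div.
- by rewrite muleC [X in (_ + X)%E]muleC.
- by apply: measurable_funS mf => // x /=; rewrite !in_itv /=; apply: scaled_itv_sub.
- by apply: measurable_funS mg => // x /=; rewrite !in_itv /=; apply: scaled_itv_sub.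
- by move=> x /(scaled_itv_sub m_gt0 t0 t'1) /f_ge0.
- by move=> x /(scaled_itv_sub n_gt0 t0 t'1) /g_ge0.
Qed.

Lemma area_minkowski_sum_strip (Mf Mg t1 t2 : R) :
  0 <= t1 -> t1 <= t2 -> t2 <= 1 ->
  (forall x, 0 <= x <= m -> f x <= Mf) -> (forall x, 0 <= x <= n -> g x <= Mg) ->
  area (minkowski_sum (region_under 0 m f) (region_under 0 n g)) =
    (area (region_under 0 m f) * ((m + n) / m)%:E
     + area (region_under 0 n g) * ((m + n) / n)%:E)%E ->
  area (minkowski_sum (region_under (t1 * m) (t2 * m) f)
                      (region_under (t1 * n) (t2 * n) g)) =
    (area (region_under (t1 * m) (t2 * m) f) * ((m + n) / m)%:E
     + area (region_under (t1 * n) (t2 * n) g) * ((m + n) / n)%:E)%E.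
Proof.
move=> t10 t12 t21 fM gM hyp.
have CD := region_under_strip_sub (lexx 0) (lexx 1); rewrite !mul0r !mul1r in CD.
have areaC := area_region_under_strip (lexx 0) (lexx 1); rewrite !mul0r !mul1r in areaC.
have finC : area (region_under 0 s F) \is a fin_num.
  apply: (@area_region_under_fin_num _ _ _ _ (Mf + Mg)) => z zs.
  have mS := dilate_mE 1; have nS := dilate_nE 1; rewrite !mul1r in mS nS.
  have ms0 : 0 < m / s by exact: divr_gt0.
  have ns0 : 0 < n / s by exact: divr_gt0.
  by apply: lerD; [apply: fM | apply: gM]; apply/andP; split; nra.
have s_ge0 := ltW s_gt0.
have t1s : 0 <= t1 * s by rewrite mulr_ge0.
have t2s : t2 * s <= s by rewrite ler_piMl // (le_trans t10).
rewrite (area_squeeze (S := `[t1 * s, t2 * s] `*` [set: R]) _ CD _ finC)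
  ?region_under_setI_strip ?area_region_under_strip //.
- exact: measurableX.
- by rewrite hyp areaC.
- exact: region_under_strip_sub.
move=> _ [[x y] [[x' y'] [[/andP[xl xr] fy] [[/andP[xl' xr'] gy] ->]]]].
have x0m : 0 <= x <= m by apply: (scaled_itv_sub m_gt0 t10 t21); apply/andP.
have x0n : 0 <= x' <= n by apply: (scaled_itv_sub n_gt0 t10 t21); apply/andP.
split; first by exists (x, y), (x', y').
split => //; rewrite /= in_itv /= /s !mulrDr.
by apply/andP; split; apply: lerD.
Qed.

End strip.

Theorem lemma4p6 (R : realType) (m n : R) (f g : R -> R) (k : nat) :
  0 < m -> 0 < n ->
  concave_on 0 m f -> positive_on 0 m f ->
  concave_on 0 n g -> positive_on 0 n g ->
  (1 <= k)%N ->
  area (minkowski_sum (region_under 0 m f) (region_under 0 n g)) =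
    ((area (region_under 0 m f) * (m^-1)%:E
      + area (region_under 0 n g) * (n^-1)%:E) * (m + n)%:E)%E ->
  forall i : nat, (1 <= i <= k)%N ->
    let xl  := (i.-1)%:R * m / k%:R in
    let xr  := i%:R * m / k%:R in
    let xl' := (i.-1)%:R * n / k%:R in
    let xr' := i%:R * n / k%:R in
    area (minkowski_sum (region_under xl xr f) (region_under xl' xr' g)) =
      ((area (region_under xl xr f) * ((m / k%:R)^-1)%:E
        + area (region_under xl' xr' g) * ((n / k%:R)^-1)%:E)
       * (m / k%:R + n / k%:R)%:E)%E.
Proof.
move=> m0 n0 cf pf cg pg k1 hyp i /andP[i1 ik] xl xr xl' xr'.
have k0 : 0 < k%:R :> R by rewrite ltr0n.
have distr (X Y : set (R * R)) (a b c : R) : 0 <= a -> 0 <= b ->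
    ((area X * a%:E + area Y * b%:E) * c%:E =
     area X * (a * c)%:E + area Y * (b * c)%:E)%E.
  by move=> a0 b0; rewrite ge0_muleDl ?mule_ge0 ?area_ge0 ?lee_fin // -!muleA -!EFinM.
have f0 x : 0 <= x <= m -> 0 <= f x by move/pf/ltW.
have g0 x : 0 <= x <= n -> 0 <= g x by move/pg/ltW.
rewrite distr ?invr_ge0 ?ltW // ![_^-1 * _]mulrC in hyp.
rewrite /xl /xr /xl' /xr' !(mulrAC _ m) !(mulrAC _ n) distr ?invr_ge0 ?divr_ge0 ?ltW //.
have -> : (m / k%:R)^-1 * (m / k%:R + n / k%:R) = (m + n) / m by field; rewrite !gt_eqF.
have -> : (n / k%:R)^-1 * (m / k%:R + n / k%:R) = (m + n) / n by field; rewrite !gt_eqF.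
apply: area_minkowski_sum_strip => //.
- exact: concave_on_measurable.
- exact: concave_on_measurable.
- by rewrite ler_pM2r ?invr_gt0 // ler_nat leq_pred.
- by rewrite ler_pdivrMr // mul1r ler_nat.
- exact: concave_on_le_twice_mid cf f0.
- exact: concave_on_le_twice_mid cg g0.
Qed.
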